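(* Let $n\in\mathbb{N}$ and suppose $n=\sum_{i=1}^{\ell}(-1)^{i-1}2^{\alpha_i}$ is an alternating binary representation of $n$. Then $\alpha_1=\lceil\log_2 n\rceil$ and, for each $i\in\{2,\dots,\ell\}$, \[ \alpha_i=\left\lceil \log_2\left((-1)^{i-1}\left(n-2^{\alpha_1}+2^{\alpha_2}-\cdots+(-1)^{i-1}2^{\alpha_{i-1}}\right)\right)\right\rceil . \] In particular, the alternating binary representation of $n$ is unique, and $(\alpha_2,\dots,\alpha_\ell)$ determines the alternating binary representation of $2^{\alpha_1}-n$.
   Context: An alternating binary representation (ABR) of $n\in\mathbb{N}$ is an expression $n=\sum_{i=1}^{\ell}(-1)^{i-1}2^{\alpha_i}$ with $\ell\ge 1$ and nonnegative integers $\alpha_1>\alpha_2>\cdots>\alpha_{\ell-1}>\alpha_\ell+1$; such $(\alpha_1,\dots,\alpha_\ell)$ is said to determine the ABR. *)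

From mathcomp Require Import all_boot all_order all_algebra.
Set Implicit Arguments. Unset Strict Implicit. Unset Printing Implicit Defensive.
Import Order.TTheory GRing.Theory Num.Theory.

(* An exponent sequence s = [:: a_1; ...; a_l] (0-based: a_{i+1} = nth 0 s i). *)

Definition abr_value (s : seq nat) : int :=
  (\sum_(i < size s) (-1) ^+ i * (2 ^ nth 0 s i)%:Z)%R.

Definition is_ABR (n : nat) (s : seq nat) : Prop :=
  [/\ 0 < size s,
      (forall i, i.+1 < size s -> nth 0 s i.+1 < nth 0 s i),
      (1 < size s -> (nth 0 s (size s).-1).+1 < nth 0 s (size s).-2)
    & (n%:Z = abr_value s)%R].

Definition ceil_log2 (m : nat) : nat := up_log 2 m.

(* For 0-based index i (paper's index i+1):
   (-1)^i * (n - 2^(a_1) + 2^(a_2) - ... + (-1)^i 2^(a_i)) *)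
Definition abr_rem (n : nat) (s : seq nat) (i : nat) : int :=
  ((-1) ^+ i * (n%:Z - \sum_(j < i) (-1) ^+ j * (2 ^ nth 0 s j)%:Z))%R.

From mathcomp Require Import all_boot all_order all_algebra zify.
Import Order.TTheory GRing.Theory Num.Theory.
Local Open Scope ring_scope.
Local Open Scope nat_scope.
Set Implicit Arguments. Unset Strict Implicit.

(* An ABR [a :: s] has value 2^a minus the ABR [s]; the gap conditions give
   2^a < 2 abr_value (a :: s) <= 2^(a+1) by induction, so the leading exponent is
   ceil_log2 of the value.  Every remainder [abr_rem n s i] is the value of the
   ABR [drop i s], which yields both the formula for the exponents and, by
   induction, uniqueness. *)

Definition abr_shape (s : seq nat) : Prop :=
  [/\ 0 < size s,
      (forall i, i.+1 < size s -> nth 0 s i.+1 < nth 0 s i)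
    & (1 < size s -> (nth 0 s (size s).-1).+1 < nth 0 s (size s).-2)].

Lemma abr_value_cons a s : abr_value (a :: s) = ((2 ^ a)%:Z - abr_value s)%R.
Proof.
rewrite /abr_value /= big_ord_recl /= expr0 mul1r -sumrN.
by congr (_ + _)%R; apply: eq_bigr => i _; rewrite exprS mulN1r mulNr.
Qed.

Lemma abr_value_seq1 a : abr_value [:: a] = (2 ^ a)%:Z.
Proof. by rewrite abr_value_cons /abr_value big_ord0 subr0. Qed.

Lemma abr_shape_cons2 a b s : abr_shape [:: a, b & s] ->
  [/\ abr_shape (b :: s), b < a & (s = [::] -> b.+1 < a)].
Proof.
case=> _ decr last_gap; split.
- split=> // [i lt_i|/= s_gt0]; first exact: (decr i.+1).
  by case: s s_gt0 {decr} last_gap => //= c s _; apply.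
- exact: (decr 0).
- by move=> s0; subst s; apply: last_gap.
Qed.

Lemma abr_shape_drop s i : abr_shape s -> i < size s -> abr_shape (drop i s).
Proof.
elim: i s => [|i IH] s shape_s lt_i; first by rewrite drop0.
case: s shape_s lt_i => [|a [|b s]] //= shape_s lt_i.
by have [shape_bs _ _] := abr_shape_cons2 shape_s; apply: IH.
Qed.

Lemma abr_value_bounds a s : abr_shape (a :: s) ->
  [/\ ((2 ^ a)%:Z < 2 * abr_value (a :: s))%R,
      (abr_value (a :: s) <= (2 ^ a)%:Z)%R
    & (s != [::] -> (abr_value (a :: s) < (2 ^ a)%:Z)%R)].
Proof.
elim: s a => [|b s IH] a shape_as.
  by rewrite abr_value_seq1; split=> //; have := expn_gt0 2 a; lia.
have [shape_bs lt_ba gap_ba] := abr_shape_cons2 shape_as.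
have [lo hi strict] := IH _ shape_bs.
rewrite abr_value_cons.
have pow_ba : 2 * 2 ^ b <= 2 ^ a by rewrite -expnS leq_exp2l.
case: s gap_ba lo hi strict {IH shape_as shape_bs} => [|c s] gap_ba lo hi strict.
  have : 2 * (2 * 2 ^ b) <= 2 ^ a by rewrite -!expnS leq_exp2l // gap_ba.
  by split=> //; lia.
by have := strict isT; split=> //; lia.
Qed.

Lemma abr_value_gt0 s : abr_shape s -> (0 < abr_value s)%R.
Proof.
case: s => [[]//|a s] shape_s.
by have [lo _ _] := abr_value_bounds shape_s; have := expn_gt0 2 a; lia.
Qed.

Lemma ceil_log2_eq m a : 2 ^ a < 2 * m -> m <= 2 ^ a -> ceil_log2 m = a.
Proof.
case: a => [|a] lo hi; first by have -> : m = 1 by lia.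
by apply: up_log_eq => //; move: lo hi; rewrite !expnS => lo hi; apply/andP; split; lia.
Qed.

Lemma abr_ceil_log2 a s : abr_shape (a :: s) ->
  ceil_log2 `|abr_value (a :: s)|%N = a.
Proof. by case/abr_value_bounds => lo hi _; apply: ceil_log2_eq; lia. Qed.

Lemma abr_value_drop s i : i <= size s ->
  abr_value s = (\sum_(j < i) (-1) ^+ j * (2 ^ nth 0 s j)%:Z
                 + (-1) ^+ i * abr_value (drop i s))%R.
Proof.
elim: i s => [|i IH] [|a s] //= le_i.
- by rewrite big_ord0 expr0 mul1r add0r.
- by rewrite big_ord0 expr0 mul1r add0r.
rewrite abr_value_cons (IH s le_i) big_ord_recl /= expr0 mul1r -addrA.
rewrite opprD -sumrN exprS mulN1r mulNr; congr (_ + (_ + _))%R.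
by apply: eq_bigr => j _; rewrite exprS mulN1r mulNr.
Qed.

Lemma abr_rem_drop n s i : n%:Z = abr_value s -> i <= size s ->
  abr_rem n s i = abr_value (drop i s).
Proof.
move=> val_n le_i; rewrite /abr_rem val_n (abr_value_drop le_i) addrC addKr.
by rewrite mulrA -expr2 sqrr_sign mul1r.
Qed.

Lemma abr_value_inj s t : abr_shape s -> abr_shape t ->
  abr_value s = abr_value t -> s = t.
Proof.
elim: s t => [|a s IH] [|c t] shape_s shape_t //; try by case: shape_s; case: shape_t.
move=> eq_val; have eq_ac : a = c.
  by rewrite -(abr_ceil_log2 shape_s) -(abr_ceil_log2 shape_t) eq_val.
subst c; congr (_ :: _).
have {}eq_val : abr_value s = abr_value t by move: eq_val; rewrite !abr_value_cons; lia.
case: s t IH shape_s shape_t eq_val => [|b s] [|d t] // IH shape_s shape_t eq_val.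
- have [shape_t' _ _] := abr_shape_cons2 shape_t.
  by have := abr_value_gt0 shape_t'; rewrite -eq_val /abr_value big_ord0.
- have [shape_s' _ _] := abr_shape_cons2 shape_s.
  by have := abr_value_gt0 shape_s'; rewrite eq_val /abr_value big_ord0.
have [shape_s' _ _] := abr_shape_cons2 shape_s.
have [shape_t' _ _] := abr_shape_cons2 shape_t.
exact: IH.
Qed.

Theorem lemma19 (n : nat) (s : seq nat) :
  is_ABR n s ->
  [/\ nth 0 s 0 = ceil_log2 n,
      (forall i, 0 < i < size s ->
         (0 < abr_rem n s i)%R /\ nth 0 s i = ceil_log2 `|abr_rem n s i|%N),
      (forall t, is_ABR n t -> t = s)
    & (1 < size s -> is_ABR (2 ^ nth 0 s 0 - n) (behead s))].
Proof.
case=> size_gt0 decr last_gap val_n.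
have shape_s : abr_shape s by [].
case: s size_gt0 decr last_gap val_n shape_s => [//|a s] _ _ _ val_n shape_s.
split.
- by rewrite -(abr_ceil_log2 shape_s) -val_n.
- move=> i /andP[_ lt_i]; rewrite (abr_rem_drop val_n (ltnW lt_i)).
  have shape_drop := abr_shape_drop shape_s lt_i.
  rewrite -[i in nth 0 _ i]addn0 -nth_drop.
  case: (drop i (a :: s)) shape_drop => [[]//|c u] shape_drop.
  by split; [exact: abr_value_gt0 | rewrite abr_ceil_log2].
- by move=> t [? ? ? val_t]; apply: abr_value_inj => //; rewrite -val_t.
- case: s val_n shape_s => [//|b s] val_n shape_s _ /=.
  have [[? ? ?] _ _] := abr_shape_cons2 shape_s.
  have [_ hi _] := abr_value_bounds shape_s.
  by split=> //; move: val_n hi; rewrite abr_value_cons; lia.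
Qed.
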